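(* Let $p\in\mathbb{T}^{\mathcal{P}([n])}$ be a tropical Plücker vector, and let $L_p\subseteq\mathbb{T}^n$ be its tropical linear space. Under the identification $\mathbb{T}^{\mathcal{J}}\cong\mathbb{T}^n\times\mathbb{T}^n$, $x\mapsto((x_1,\dots,x_n),(x_{1^*},\dots,x_{n^*}))$, we have $\mathcal{C}(p)^\top=L_p\times L_{p^*}$.
   Context: $\mathbb{T}=\mathbb{R}\cup\{\infty\}$; $\mathcal{P}([n])$ the set of subsets of $[n]$. A tropical Wick vector is $p$ such that for all $S,T\subseteq[n]$ the minimum $\min_{i\in S\Delta T}(p_{S\Delta\{i\}}+p_{T\Delta\{i\}})$ is attained at least twice or equals $\infty$; a tropical Plücker vector is a tropical Wick vector whose support sets $\{S:p_S\neq\infty\}$ all have the same size $r_p$. Its dual is $p^*_S=p_{[n]\setminus S}$. Plücker circuits: for $T\subseteq[n]$ with $|T|=r_p+1$ define $d_T\in\mathbb{T}^n$ by $(d_T)_i=p_{T\setminus\{i\}}$ if $i\in T$, $\infty$ otherwise; a Plücker circuit is $d_T+\lambda\mathbf{1}$ ($\lambda\in\mathbb{R}$) with nonempty support. $x,y$ are tropically orthogonal if $\min_k(x_k+y_k)$ is attained at least twice or equals $\infty$. The tropical linear space $L_p\subseteq\mathbb{T}^n$ is the set of vectors tropically orthogonal to all Plücker circuits of $p$. Let $\mathcal{J}=\{1,\dots,n,1^*,\dots,n^*\}$; for $S\subseteq[n]$ let $\bar S=S\cup\{i^*:i\in[n]\setminus S\}$ and $\bar p_{\bar S}:=p_S$.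 For $T\subseteq[n]$, $(c_T)_i=\bar p_{\bar T\Delta\{i,i^*\}}$ if $i\in\bar T$, $\infty$ otherwise; the circuits of $p$ are vectors $c_T+\lambda\mathbf{1}$ with nonempty support, $\mathcal{C}(p)$ is their set, and $\mathcal{C}(p)^\top\subseteq\mathbb{T}^{\mathcal{J}}$ is the set of vectors tropically orthogonal to all of them. *)

From HB Require Import structures.
From mathcomp Require Import all_boot all_order all_algebra.
From mathcomp Require Import reals.
Set Implicit Arguments. Unset Strict Implicit. Unset Printing Implicit Defensive.
Import Order.TTheory GRing.Theory Num.Theory.
Local Open Scope ring_scope.

Section Tropical.
Variable R : realType.

(* The tropical numbers T = R ∪ {∞}; None represents ∞. *)
Definition trop := option R.

Definition tmul (a b : trop) : trop :=
  match a, b with Some x, Some y => Some (x + y) | _, _ => None end.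

Definition min_twice (I : finType) (A : {set I}) (f : I -> trop) : Prop :=
  (forall k, k \in A -> f k = None) \/
  exists i j m, [/\ i \in A, j \in A, i != j, f i = Some m & f j = Some m] /\
    forall k v, k \in A -> f k = Some v -> m <= v.

Definition symdiff (I : finType) (S T : {set I}) : {set I} :=
  (S :\: T) :|: (T :\: S).

Variable n : nat.

Definition is_wick (p : {set 'I_n} -> trop) : Prop :=
  forall S T : {set 'I_n},
    min_twice (symdiff S T)
      (fun i => tmul (p (symdiff S [set i])) (p (symdiff T [set i]))).

Definition support_rank (p : {set 'I_n} -> trop) (r : nat) : Prop :=
  forall S, p S <> None -> #|S| = r.

Definition is_plucker (p : {set 'I_n} -> trop) : Prop :=
  is_wick p /\ exists r, support_rank p r.

Definition dual (p : {set 'I_n} -> trop) : {set 'I_n} -> trop :=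
  fun S => p (~: S).

Definition trop_orth (I : finType) (x y : I -> trop) : Prop :=
  min_twice [set: I] (fun k => tmul (x k) (y k)).

Definition dvec (p : {set 'I_n} -> trop) (T : {set 'I_n}) (i : 'I_n) : trop :=
  if i \in T then p (T :\ i) else None.

(* Plücker circuits of p, where r = r_p is the support size of p. *)
Definition plucker_circuit (p : {set 'I_n} -> trop) (r : nat) (x : 'I_n -> trop)
  : Prop :=
  exists (T : {set 'I_n}) (lam : R),
    [/\ #|T| = r.+1, (forall i, x i = tmul (dvec p T i) (Some lam))
      & exists i, x i <> None].

Definition trop_linspace (p : {set 'I_n} -> trop) (r : nat) (x : 'I_n -> trop)
  : Prop :=
  forall y, plucker_circuit p r y -> trop_orth x y.

(* J = {1..n} ⊔ {1*..n*}: inl i = i, inr i = i*. *)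
Definition J := ('I_n + 'I_n)%type.

Definition star (j : J) : J :=
  match j with inl i => inr i | inr i => inl i end.

Definition bar (S : {set 'I_n}) : {set J} :=
  [set j : J | match j with inl i => i \in S | inr i => i \notin S end].

(* \bar p (\bar S) := p_S; on a subset of J we read off S from the unstarred part
   (this agrees with the definition on all sets of the form \bar S, which are the
   only arguments ever used). *)
Definition pbar (p : {set 'I_n} -> trop) (A : {set J}) : trop :=
  p [set i : 'I_n | inl i \in A].

Definition cvec (p : {set 'I_n} -> trop) (T : {set 'I_n}) (j : J) : trop :=
  if j \in bar T then pbar p (symdiff (bar T) [set j; star j]) else None.

Definition circuit (p : {set 'I_n} -> trop) (x : J -> trop) : Prop :=
  exists (T : {set 'I_n}) (lam : R),
    (forall j, x j = tmul (cvec p T j) (Some lam)) /\ exists j, x j <> None.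

Definition circuits_orth (p : {set 'I_n} -> trop) (x : J -> trop) : Prop :=
  forall y, circuit p y -> trop_orth x y.

End Tropical.

From HB Require Import structures.
From mathcomp Require Import all_boot all_order all_algebra.
From mathcomp Require Import reals zify.
Set Implicit Arguments. Unset Strict Implicit. Unset Printing Implicit Defensive.

(* On
   the unstarred coordinates c_T is d_T, on the starred ones it is the vector
   d_{[n]\T} of p*.  If c_T is finite somewhere on the unstarred half then
   |T| = r_p + 1, so every p_{T ∪ i} with i ∉ T is infinite and c_T vanishes
   on the starred half; symmetrically with p*.  Hence the circuits of p are
   exactly the Plücker circuits of p and of p*, each placed on its own half,
   and orthogonality to a vector supported on one half only sees that half. *)

Section TropicalCircuits.
Variable R : realType.

Lemma tmulr_None (a : trop R) : tmul a None = None.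
Proof. by case: a. Qed.

Lemma tmulr_Some_neq_None (a : trop R) l : tmul a (Some l) <> None -> a <> None.
Proof. by case: a. Qed.

Lemma min_twice_restrict (I K : finType) (f : I -> K) (h : K -> trop R) :
  injective f -> (forall k, h k <> None -> exists i, f i = k) ->
  min_twice [set: K] h <-> min_twice [set: I] (h \o f).
Proof.
move=> inj_f im_f; split.
- case=> [h_inf|[k1 [k2 [m [[_ _ k12 hk1 hk2] min_m]]]]].
    by left=> i _; apply: h_inf.
  have [i1 fi1] : exists i, f i = k1 by apply: im_f; rewrite hk1.
  have [i2 fi2] : exists i, f i = k2 by apply: im_f; rewrite hk2.
  subst k1 k2.
  right; exists i1, i2, m; split=> [|i v _ hiv]; last exact: min_m hiv.
  by split; rewrite ?inE //; apply: contraNneq k12 => ->.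
- case=> [h_inf|[i1 [i2 [m [[_ _ i12 hi1 hi2] min_m]]]]].
    left=> k _; case hk: (h k) => [v|] //.
    have [i fik] : exists i, f i = k by apply: im_f; rewrite hk.
    by move: (h_inf i (in_setT i)); rewrite /= fik hk.
  right; exists (f i1), (f i2), m; split=> [|k v _ hkv].
    by split; rewrite ?inE ?(inj_eq inj_f).
  have [i fik] : exists i, f i = k by apply: im_f; rewrite hkv.
  by apply: (min_m i); rewrite ?inE //= fik.
Qed.

Definition glue (I I' : Type) (u : I -> trop R) (v : I' -> trop R) :
    I + I' -> trop R :=
  fun j => match j with inl i => u i | inr i => v i end.

Lemma trop_orth_inl (I I' : finType) (x y : I + I' -> trop R) :
  (forall i, y (inr i) = None) ->
  trop_orth x y <-> trop_orth (x \o inl) (y \o inl).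
Proof.
move=> y_inr; apply: min_twice_restrict => [a b [] //|[i|i]]; first by exists i.
by rewrite y_inr tmulr_None.
Qed.

Lemma trop_orth_inr (I I' : finType) (x y : I + I' -> trop R) :
  (forall i, y (inl i) = None) ->
  trop_orth x y <-> trop_orth (x \o inr) (y \o inr).
Proof.
move=> y_inl; apply: min_twice_restrict => [a b [] //|[i|i]]; last by exists i.
by rewrite y_inl tmulr_None.
Qed.

Variable n : nat.
Implicit Types (p : {set 'I_n} -> trop R) (T : {set 'I_n}).

Lemma dvec_dualK p T i : dvec (dual (dual p)) T i = dvec p T i.
Proof. by rewrite /dvec /dual setCK. Qed.

Lemma cvec_inl p T i : cvec p T (inl i) = dvec p T i.
Proof.
rewrite /cvec /dvec /pbar /symdiff inE; case: ifP => // iT; congr p.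
apply/setP => k; rewrite !inE -[inl k == inl i]/(k == i) /=.
by case: (eqVneq k i) => [->|_]; rewrite ?eqxx ?iT ?andbT ?andbF ?orbF.
Qed.

Lemma cvec_inr p T i : cvec p T (inr i) = dvec (dual p) (~: T) i.
Proof.
rewrite /cvec /dvec /dual /pbar /symdiff !inE; case: ifP => //= iT; congr p.
apply/setP => k; rewrite !inE -[inl k == inl i]/(k == i) /=.
by case: (eqVneq k i) => [->|_]; rewrite ?eqxx ?iT ?andbT ?andbF ?orbF ?negbK.
Qed.

Section SupportRank.
Variables (p : {set 'I_n} -> trop R) (r : nat).
Hypothesis p_rank : support_rank p r.

Lemma dvec_card T i : dvec p T i <> None -> #|T| = r.+1.
Proof.
rewrite /dvec; case: ifP => // iT /p_rank cardTi.
by rewrite (cardsD1 i T) iT cardTi.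
Qed.

Lemma dvec_dual_setC T i : #|T| = r.+1 -> dvec (dual p) (~: T) i = None.
Proof.
rewrite /dvec /dual in_setC; case: ifP => //= iT cardT.
rewrite setCD setCK; case pTi: (p _) => [v|] //.
have : #|T :|: [set i]| = r by apply: p_rank; rewrite pTi.
by rewrite setUC cardsU1 iT cardT; lia.
Qed.

End SupportRank.
Lemma circuit_glue_l p r y :
  support_rank p r -> plucker_circuit p r y -> circuit p (glue y (fun _ => None)).
Proof.
move=> p_rank [T [lam [cardT y_def [i0 yi0]]]].
exists T, lam; split=> [[i|i] /=|]; last by exists (inl i0).
  by rewrite cvec_inl y_def.
by rewrite cvec_inr (dvec_dual_setC p_rank).
Qed.

Lemma circuit_glue_r p r' y :
  support_rank (dual p) r' -> plucker_circuit (dual p) r' y ->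
  circuit p (glue (fun _ => None) y).
Proof.
move=> dp_rank [T [lam [cardT y_def [i0 yi0]]]].
exists (~: T), lam; split=> [[i|i] /=|]; last by exists (inr i0).
  by rewrite cvec_inl -dvec_dualK (dvec_dual_setC dp_rank).
by rewrite cvec_inr setCK y_def.
Qed.

Lemma circuit_split p r r' y :
  support_rank p r -> support_rank (dual p) r' -> circuit p y ->
  (plucker_circuit p r (y \o inl) /\ forall i, y (inr i) = None) \/
  (plucker_circuit (dual p) r' (y \o inr) /\ forall i, y (inl i) = None).
Proof.
move=> p_rank dp_rank [T [lam [y_def [[i0|i0] yi0]]]];
  rewrite y_def ?cvec_inl ?cvec_inr in yi0; have := tmulr_Some_neq_None yi0.
- move/(dvec_card p_rank) => cardT; left; split=> [|i].
    by exists T, lam; split=> // [i|]; [|exists i0]; rewrite /= y_def cvec_inl.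
  by rewrite y_def cvec_inr (dvec_dual_setC p_rank).
- move/(dvec_card dp_rank) => cardT; right; split=> [|i].
    by exists (~: T), lam; split=> // [i|]; [|exists i0]; rewrite /= y_def cvec_inr.
  by rewrite y_def cvec_inl -[T]setCK -dvec_dualK (dvec_dual_setC dp_rank).
Qed.

End TropicalCircuits.

Theorem proposition6p13 (R : realType) (n : nat) (p : {set 'I_n} -> trop R)
  (r r' : nat) :
  is_plucker p -> support_rank p r -> support_rank (dual p) r' ->
  forall x : J n -> trop R,
    circuits_orth p x <->
    (trop_linspace p r (fun i => x (inl i)) /\
     trop_linspace (dual p) r' (fun i => x (inr i))).
Proof.
move=> _ p_rank dp_rank x; split=> [x_orth|[x_lin xd_lin] y].
- split=> y y_circ.
    apply: (trop_orth_inl x (y := glue y (fun _ => None)) _).1 => //.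
    exact/x_orth/(circuit_glue_l p_rank).
  apply: (trop_orth_inr x (y := glue (fun _ => None) y) _).1 => //.
  exact/x_orth/(circuit_glue_r dp_rank).
- case/(circuit_split p_rank dp_rank) => [[y_plk y_inr]|[y_plk y_inl]].
    by apply/(trop_orth_inl x y_inr); apply: x_lin.
  by apply/(trop_orth_inr x y_inl); apply: xd_lin.
Qed.
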